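(* Let $A$ be a totally unimodular $n\times m$ matrix, let $L(A) := \{v\in\mathbb{Z}^m : Av = 0\}$ and $\lambda := \lambda(L(A))$. Then every nonzero vector $v \in L(A)$ with $\lVert v\rVert_1 < 2\lambda$ is a circuit of $A$.
   Context: A matrix is totally unimodular if every square submatrix has determinant $0$ or $\pm1$. $\lambda(L) := \min\{\lVert v\rVert_1 : 0 \ne v\in L\}$ with $\lVert\cdot\rVert_1$ the $\ell_1$-norm. A vector $u\in L(A)$ is a circuit of $A$ if there is no nonzero $v\in L(A)$ with $\mathrm{supp}(v) \subsetneq \mathrm{supp}(u)$, and $\gcd(u_1,\dots,u_m) = 1$. *)

From mathcomp Require Import all_boot all_order all_algebra.
Set Implicit Arguments. Unset Strict Implicit. Unset Printing Implicit Defensive.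
Import Order.TTheory GRing.Theory Num.Theory.
Local Open Scope ring_scope.

Definition totally_unimodular (n m : nat) (A : 'M[int]_(n, m)) : Prop :=
  forall (k : nat) (f : 'I_k -> 'I_n) (g : 'I_k -> 'I_m),
    injective f -> injective g ->
    let d := \det (mxsub f g A) in [\/ d = 0, d = 1 | d = -1].

Definition inL (n m : nat) (A : 'M[int]_(n, m)) (v : 'cV[int]_m) : Prop :=
  A *m v = 0.

Definition norm1 (m : nat) (v : 'cV[int]_m) : nat :=
  (\sum_(i < m) `|v i ord0|%N)%N.

Definition supp (m : nat) (v : 'cV[int]_m) : {set 'I_m} :=
  [set i | v i ord0 != 0].

Definition is_lambda (n m : nat) (A : 'M[int]_(n, m)) (l : nat) : Prop :=
  (exists v, v != 0 /\ inL A v /\ norm1 v = l) /\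
  (forall v, v != 0 -> inL A v -> (l <= norm1 v)%N).

Definition circuit (n m : nat) (A : 'M[int]_(n, m)) (u : 'cV[int]_m) : Prop :=
  [/\ inL A u,
      ~ (exists v, [/\ v != 0, inL A v & supp v \proper supp u]) &
      (\big[gcdn/0%N]_(i < m) `|u i ord0|%N)%N = 1%N].

From mathcomp Require Import all_boot all_order all_algebra.
From mathcomp Require Import zify ring.
From Stdlib Require Import Classical_Prop.
Set Implicit Arguments. Unset Strict Implicit. Unset Printing Implicit Defensive.
Import Order.TTheory GRing.Theory Num.Theory.
Local Open Scope ring_scope.

(* Every nonzero v in L(A) is dominated, coordinatewise in sign and support, by a
   vector y of L(A) with minimal support: cancel one coordinate of v against a vector
   of smaller support, choosing the coordinate of least ratio so that no sign flips.
   For totally unimodular A, the columns of supp y minus one index j are independent,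
   so some square submatrix on them has determinant +-1, and Cramer's rule shows that
   y_j divides every entry of y. Thus all nonzero entries of y have the same absolute
   value and the sign vector c of y lies in L(A). By conformality
   ||v||_1 = ||v - c||_1 + ||c||_1, and if v <> c both terms are at least lambda. *)

Lemma rV_rat_int_multiple k (z : 'rV[rat]_k) :
  exists2 D : int, D != 0 & exists w : 'rV[int]_k, map_mx intr w = D%:~R *: z.
Proof.
exists (\prod_(t < k) denq (z 0 t)).
  by rewrite prodf_seq_neq0; apply/allP => t _; rewrite denq_neq0.
exists (\row_t (numq (z 0 t) * \prod_(s < k | s != t) denq (z 0 s))).
apply/matrixP => i j; rewrite ord1 !mxE [in RHS](bigD1 j) //= !intrM numqE; ring.
Qed.

Lemma inj_int_row_full n k (N : 'M[int]_(n, k)) :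
  (forall w : 'cV_k, N *m w = 0 -> w = 0) -> row_full (map_mx intr N : 'M[rat]_(n, k)).
Proof.
move=> N_inj; rewrite /row_full -mxrank_tr; apply: inj_row_free => z zN0.
have := congr1 trmx zN0; rewrite trmx_mul trmxK trmx0 => Nz0.
have [D D0 [w wE]] := rV_rat_int_multiple z.
have /N_inj/(congr1 trmx) : N *m w^T = 0.
  have /matrixP Nw : map_mx intr (N *m w^T) = 0 :> 'M[rat]_(n, 1).
    by rewrite map_mxM -map_trmx wE linearZ -scalemxAr Nz0 scaler0.
  by apply/matrixP => i j; move: (Nw i j); rewrite !mxE => /eqP; rewrite intr_eq0 => /eqP.
rewrite trmxK trmx0 => w0; apply/eqP; move: wE; rewrite w0 map_mx0 => /esym/eqP.
by rewrite scalemx_eq0 intr_eq0 (negbTE D0).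
Qed.

Lemma inj_int_rowsub_det_neq0 n k (N : 'M[int]_(n, k)) :
  (forall w : 'cV_k, N *m w = 0 -> w = 0) ->
  exists2 f : 'I_k -> 'I_n, injective f & \det (rowsub f N) != 0.
Proof.
move=> /inj_int_row_full rf; exists (fullrankfun rf); first exact: fullrankfun_inj.
have := fullrowsub_unit rf; rewrite unitmxE unitfE -map_mxsub det_map_mx.
by rewrite intr_eq0.
Qed.

Definition support_minimal n m (A : 'M[int]_(n, m)) (u : 'cV[int]_m) : Prop :=
  ~ (exists v, [/\ v != 0, inL A v & supp v \proper supp u]).

Lemma supp_eq0 m (v : 'cV[int]_m) : (supp v == set0) = (v == 0).
Proof.
apply/eqP/eqP => [/setP v0|->]; last by apply/setP => i; rewrite !inE mxE eqxx.
apply/matrixP => i j; rewrite ord1 mxE; move: (v0 i); rewrite !inE.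
by move/negbFE/eqP.
Qed.

Section ColumnSubset.

Variables (m : nat) (D : {set 'I_m}).
Local Notation emb := (enum_val : 'I_#|D| -> 'I_m).

(* [colsub emb 1%:M *m w] is w : 'cV_#|D| extended by zero outside D. *)

Lemma supp_colsub1_mul (w : 'cV[int]_#|D|) : supp (colsub emb 1%:M *m w) \subset D.
Proof.
apply/subsetP => l; rewrite inE mxE; apply: contraR => lD.
apply/eqP/big1 => t _; rewrite !mxE.
by case: eqP => [lt|]; rewrite ?mul0r //; rewrite lt enum_valP in lD.
Qed.

Lemma rowsub_colsub1_mul (w : 'cV[int]_#|D|) : rowsub emb (colsub emb 1%:M *m w) = w.
Proof.
rewrite -mul_rowsub_mx -[w in RHS]mul1mx; congr (_ *m _).
by apply/matrixP => s t; rewrite !mxE (inj_eq enum_val_inj).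
Qed.

Lemma colsub1_mul_rowsub (v : 'cV[int]_m) :
  supp v \subset D -> colsub emb 1%:M *m rowsub emb v = v.
Proof.
move=> vD; apply/matrixP => l c; rewrite ord1.
have [lD|lD] := boolP (l \in D); last first.
  have out u : supp u \subset D -> u l ord0 = 0.
    by move=> /subsetP/(_ l)/contraNN/(_ lD); rewrite inE negbK => /eqP.
  by rewrite !out // supp_colsub1_mul.
rewrite mxE (bigD1 (enum_rank_in lD l)) //= big1 => [|t tl]; rewrite !mxE ?enum_rankK_in //.
  by rewrite eqxx mul1r addr0.
by rewrite -(enum_rankK_in lD lD) (inj_eq enum_val_inj) eq_sym (negbTE tl) mul0r.
Qed.

Lemma support_minimal_colsub_inj n (A : 'M[int]_(n, m)) y :
  support_minimal A y -> D \proper supp y ->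
  forall w : 'cV_#|D|, colsub emb A *m w = 0 -> w = 0.
Proof.
move=> ymin Dy w Aw; apply/eqP; apply: contraT => w0; case: ymin.
exists (colsub emb 1%:M *m w); split.
- by apply: contraNneq w0 => v0; rewrite -(rowsub_colsub1_mul w) v0 linear0.
- by rewrite /inL mulmxA mulmx_colsub mulmx1.
- exact: sub_proper_trans (supp_colsub1_mul w) Dy.
Qed.

End ColumnSubset.

Lemma unitmx_mul_dvdz k (M : 'M[int]_k) (Y b : 'cV[int]_k) (a : int) :
  M \in unitmx -> M *m Y = a *: b -> forall i, (a %| Y i ord0)%Z.
Proof.
move=> Mu MY i; have -> : Y = a *: (invmx M *m b) by rewrite scalemxAr -MY mulKmx.
by rewrite mxE dvdz_mulr.
Qed.

Lemma TU_support_minimal_dvdz n m (A : 'M[int]_(n, m)) y j i :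
  totally_unimodular A -> inL A y -> support_minimal A y ->
  y j ord0 != 0 -> (y j ord0 %| y i ord0)%Z.
Proof.
move=> TU Ay ymin yj0.
have [->|ij] := eqVneq i j; first exact: dvdzz.
have [->|yi0] := eqVneq (y i ord0) 0; first exact: dvdz0.
set D := supp y :\ j.
have Dy : D \proper supp y by rewrite properD1 // inE.
have iD : i \in D by rewrite !inE ij yi0.
pose emb := enum_val : 'I_#|D| -> 'I_m.
have [f f_inj detM] := inj_int_rowsub_det_neq0 (support_minimal_colsub_inj ymin Dy).
set M := rowsub f (colsub emb A) in detM.
have Mu : M \in unitmx.
  move: detM; rewrite unitmxE /M -mxsubrc.
  by have [->|->|->] := TU _ f emb f_inj enum_val_inj; rewrite ?eqxx ?unitr1 ?unitrN1.
set y' := y - y j ord0 *: delta_mx j 0.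
have y'D : supp y' \subset D.
  apply/subsetP => l; rewrite !inE !mxE eqxx andbT.
  by have [->|lj] := eqVneq l j; rewrite ?mulr1 ?subrr ?eqxx // mulr0 subr0.
have My' : M *m rowsub emb y' = y j ord0 *: - rowsub f (col j A).
  rewrite mul_rowsub_mx -[A in colsub _ A]mulmx1 -mulmx_colsub -mulmxA.
  rewrite colsub1_mul_rowsub // mulmxBr Ay sub0r -scalemxAr -colE.
  by apply/matrixP => r c; rewrite !mxE mulrN.
have := unitmx_mul_dvdz Mu My' (enum_rank_in iD i).
by rewrite mxE /emb enum_rankK_in // /y' !mxE (negbTE ij) mulr0 subr0.
Qed.

Definition sgzv m (y : 'cV[int]_m) : 'cV[int]_m := map_mx (@sgz int) y.

Lemma supp_sgzv m (y : 'cV[int]_m) : supp (sgzv y) = supp y.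
Proof. by apply/setP => i; rewrite !inE mxE sgz_eq0. Qed.

Lemma TU_support_minimal_absz n m (A : 'M[int]_(n, m)) y i j :
  totally_unimodular A -> inL A y -> support_minimal A y ->
  y i ord0 != 0 -> y j ord0 != 0 -> `|y i ord0|%N = `|y j ord0|%N.
Proof.
move=> TU Ay ymin yi0 yj0.
by apply/eqP; rewrite eqn_dvd -!dvdzE !(TU_support_minimal_dvdz _ TU Ay ymin).
Qed.

Lemma TU_support_minimal_sgzv n m (A : 'M[int]_(n, m)) y :
  totally_unimodular A -> inL A y -> support_minimal A y -> y != 0 ->
  inL A (sgzv y).
Proof.
move=> TU Ay ymin; rewrite -supp_eq0 => /set0Pn[j]; rewrite inE => yj0.
have yE : y = (`|y j ord0|%N)%:Z *: sgzv y.
  apply/matrixP => i c; rewrite ord1 !mxE.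
  have [->|yi0] := eqVneq (y i ord0) 0; first by rewrite sgz0 mulr0.
  by rewrite {1}[y i ord0]intEsg (TU_support_minimal_absz TU Ay ymin yi0 yj0) mulrC.
move: Ay; rewrite /inL {1}yE -scalemxAr => /eqP.
by rewrite scalemx_eq0 abszE normr_eq0 (negbTE yj0) => /eqP.
Qed.

Definition conformal m (y x : 'cV[int]_m) : Prop :=
  forall i, y i ord0 != 0 -> 0 < y i ord0 * x i ord0.

Lemma conformal_refl m (x : 'cV[int]_m) : conformal x x.
Proof. by move=> i xi0; nia. Qed.

Lemma conformal_trans m (y z x : 'cV[int]_m) :
  conformal y z -> conformal z x -> conformal y x.
Proof.
move=> yz zx i yi0; have yzi := yz i yi0.
have zi0 : z i ord0 != 0 by apply: contraTneq yzi => ->; rewrite mulr0.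
have := zx i zi0; nia.
Qed.

Lemma absz_conformal_sgz (y v : int) :
  (y != 0 -> 0 < y * v) -> `|v|%N = (`|v - sgz y|%N + `|sgz y|%N)%N.
Proof.
move=> yv; have [y0|y0|->] := ltrgtP y 0; last by rewrite sgz0 subr0 addn0.
- by move: (yv (ltr0_neq0 y0)); rewrite nmulr_rgt0 // ltr0_sgz //; lia.
- by move: (yv (lt0r_neq0 y0)); rewrite pmulr_rgt0 // gtr0_sgz //; lia.
Qed.

Lemma norm1_conformal_sgzv m (y v : 'cV[int]_m) :
  conformal y v -> norm1 v = (norm1 (v - sgzv y) + norm1 (sgzv y))%N.
Proof.
move=> yv; rewrite /norm1 -big_split /=; apply: eq_bigr => i _; rewrite !mxE.
exact/absz_conformal_sgz/yv.
Qed.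

Lemma exists_min_ratio m (x w : 'cV[int]_m) i0 :
  0 < x i0 ord0 * w i0 ord0 ->
  exists2 j, 0 < x j ord0 * w j ord0 &
    forall i, 0 < x i ord0 * w i ord0 ->
      `|x j ord0| * `|w i ord0| <= `|x i ord0| * `|w j ord0|.
Proof.
move=> pos_i0; pose ratio i : rat := `|x i ord0|%:~R / `|w i ord0|%:~R.
pose pos := [pred i | 0 < x i ord0 * w i ord0].
case: (@arg_minP _ _ _ i0 pos ratio pos_i0) => j pos_j j_min; exists j => // i pos_i.
have w_gt0 k : 0 < x k ord0 * w k ord0 -> 0 < `|w k ord0|.
  by rewrite normr_gt0; apply: contraTneq => ->; rewrite mulr0.
have := j_min i pos_i; rewrite /ratio ler_pdivrMr ?ltr0z ?w_gt0 //.
by rewrite mulrAC ler_pdivlMr ?ltr0z ?w_gt0 // -!intrM ler_int.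
Qed.

Lemma conformal_reduction_pos n m (A : 'M[int]_(n, m)) x w i0 :
  inL A x -> inL A w -> supp w \proper supp x -> 0 < x i0 ord0 * w i0 ord0 ->
  exists z, [/\ z != 0, inL A z, supp z \proper supp x & conformal z x].
Proof.
move=> Ax Aw /properP[/subsetP wx [l xl wl]] pos_i0; rewrite !inE negbK in xl wl.
have [j pos_j j_min] := exists_min_ratio pos_i0.
(* z_j = 0, and z_i x_i >= 0 because j minimises |x_i| / |w_i| over the i where
   x and w have the same sign. *)
pose z := `|w j ord0| *: x - `|x j ord0| *: w.
have zE i : z i ord0 = `|w j ord0| * x i ord0 - `|x j ord0| * w i ord0.
  by rewrite !mxE.
have Az : inL A z by rewrite /inL mulmxBr -!scalemxAr Ax Aw !scaler0 subr0.
clearbody z.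
have zx i : z i ord0 != 0 -> x i ord0 != 0.
  apply: contra => /eqP xi0; have := wx i; rewrite !inE zE xi0 eqxx mulr0 sub0r.
  by case: eqP => [->|_ /(_ isT)//]; rewrite mulr0 oppr0.
exists z; split.
- have wj0 : `|w j ord0| != 0.
    by rewrite normr_eq0; apply: contraTneq pos_j => ->; rewrite mulr0.
  apply: contraTneq xl => z0; have := zE l.
  rewrite z0 mxE (eqP wl) mulr0 subr0 => /esym/eqP.
  by rewrite mulf_eq0 (negbTE wj0) => /eqP->; rewrite eqxx.
- exact: Az.
- apply/properP; split; first by apply/subsetP => i; rewrite !inE; apply: zx.
  by exists j; rewrite !inE ?zE ?negbK; nia.
- move=> i zi0; have xi0 := zx i zi0; rewrite lt_def mulf_neq0 //= zE.
  have [pos_i|] := ltP 0 (x i ord0 * w i ord0); last by nia.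
  have := j_min i pos_i; nia.
Qed.

Lemma conformal_reduction n m (A : 'M[int]_(n, m)) x w :
  inL A x -> w != 0 -> inL A w -> supp w \proper supp x ->
  exists z, [/\ z != 0, inL A z, supp z \proper supp x & conformal z x].
Proof.
move=> Ax; rewrite -supp_eq0 => /set0Pn[i0 wi0] Aw wx.
have xi0 : x i0 ord0 != 0 by move: (subsetP (proper_sub wx) i0 wi0); rewrite inE.
rewrite inE in wi0; have [neg|pos|/eqP] := ltrgtP (x i0 ord0 * w i0 ord0) 0.
- apply: (@conformal_reduction_pos _ _ A x (- w) i0) => //.
  + by rewrite /inL mulmxN Aw oppr0.
  + suff -> : supp (- w) = supp w by [].
    by apply/setP => i; rewrite !inE mxE oppr_eq0.
  + by rewrite mxE mulrN oppr_gt0.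
- exact: conformal_reduction_pos pos.
- by rewrite mulf_eq0 (negbTE xi0) (negbTE wi0).
Qed.

Lemma exists_support_minimal_conformal n m (A : 'M[int]_(n, m)) x :
  x != 0 -> inL A x ->
  exists y, [/\ y != 0, inL A y, support_minimal A y & conformal y x].
Proof.
have [k] := ubnP #|supp x|; elim: k x => // k IH x lt_xk x0 Ax.
have [[w [w0 Aw wx]]|xmin] := classic (exists w, [/\ w != 0, inL A w & supp w \proper supp x]).
  have [z [z0 Az zx conf_zx]] := conformal_reduction Ax w0 Aw wx.
  have [|y [y0 Ay ymin conf_yz]] := IH z _ z0 Az.
    exact: leq_trans (proper_card zx) _.
  by exists y; split => //; apply: conformal_trans conf_yz conf_zx.
by exists x; split => //; apply: conformal_refl.
Qed.

Lemma big_gcdn_absz1 m (u : 'cV[int]_m) j :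
  `|u j ord0|%N = 1%N -> (\big[gcdn/0%N]_(i < m) `|u i ord0|%N)%N = 1%N.
Proof. by move=> uj1; rewrite (bigD1 j) //= uj1 gcd1n. Qed.

Theorem mainTheorem5 (n m : nat) (A : 'M[int]_(n, m)) (lam : nat) :
  totally_unimodular A -> is_lambda A lam ->
  forall v : 'cV[int]_m, v != 0 -> inL A v -> (norm1 v < 2 * lam)%N ->
  circuit A v.
Proof.
move=> TU [_ lam_min] v v0 Av v_lt.
have [y [y0 Ay ymin conf_yv]] := exists_support_minimal_conformal v0 Av.
have Ac := TU_support_minimal_sgzv TU Ay ymin y0.
have c0 : sgzv y != 0 by rewrite -supp_eq0 supp_sgzv supp_eq0.
have -> : v = sgzv y.
  apply/eqP; rewrite -subr_eq0; apply: contraLR v_lt => vc0.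
  rewrite -leqNgt (norm1_conformal_sgzv conf_yv) mul2n -addnn leq_add ?lam_min //.
  by rewrite /inL mulmxBr Av Ac subrr.
move: y0; rewrite -supp_eq0 => /set0Pn[j]; rewrite inE => yj0.
split; [exact: Ac | rewrite supp_sgzv; exact: ymin | apply: (big_gcdn_absz1 (j := j))].
by apply/eqP; rewrite mxE -eqz_nat abszE normr_sgz yj0.
Qed.
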